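(* Let $D$ be a Dyck path of length $2n$. There is a bijection $\kappa$ from the set of columns of $S(D)$ that are below a step $\nearrow$ to the set of odd columns of $S(D)$ such that, for every such column $c$, $c$ and $\kappa(c)$ contain the same number of cells.
   Context: A Dyck path of length $2m$ is a lattice path from $(0,0)$ to $(2m,0)$ with steps $\nearrow=(1,1)$, $\searrow=(1,-1)$ never going below the $x$-axis; $P(x)$ denotes its height at abscissa $x$. A cell is a point $(a,b)\in\mathbb{Z}^2$ with $b\ge0$, $a+b$ even (the tilted square with vertices $(a,b),(a+1,b\pm1),(a+2,b)$). The Dyck shape of $P$ (length $2m$) is $S(P)=\{(a,b): b\ge0,\ a+b\text{ even},\ 0\le a\le 2m-2,\ b+1\le P(a+1)\}$. For $0\le a\le 2m-2$, the column $a$ of $S(P)$ (which is the $(a+1)$-st column counting from $1$) is the set of cells of $S(P)$ with first coordinate $a$. It is below a step $\nearrow$ if the $(a+1)$-st step of $P$ is $\nearrow$. It is an odd column if $a+1$ is odd, i.e. $a$ is even. *)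

From mathcomp Require Import all_boot.
Set Implicit Arguments. Unset Strict Implicit. Unset Printing Implicit Defensive.

(* A lattice path is a sequence of steps: true = NE step (1,1), false = SE step (1,-1). *)
Definition nups (s : seq bool) : nat := count id s.
Definition ndowns (s : seq bool) : nat := count negb s.

(* Height P(x) of the path at abscissa x (truncated subtraction is exact on
   Dyck paths, where ups >= downs on every prefix). *)
Definition height (P : seq bool) (x : nat) : nat :=
  nups (take x P) - ndowns (take x P).

Definition dyck (m : nat) (P : seq bool) : Prop :=
  [/\ size P = m.*2,
      (forall x, ndowns (take x P) <= nups (take x P)) &
      nups P = ndowns P].

Definition in_shape (m : nat) (P : seq bool) (c : nat * nat) : bool :=
  [&& ~~ odd (c.1 + c.2), c.1 <= m.*2 - 2 & c.2 + 1 <= height P c.1.+1].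

(* Column a of S(P): its cells (a,b).  Every cell of S(P) has b < size P,
   since heights are bounded by the length, so enumerating b < size P is exhaustive. *)
Definition column (m : nat) (P : seq bool) (a : nat) : seq (nat * nat) :=
  [seq c <- [seq (a, b) | b <- iota 0 (size P)] | in_shape m P c].

Definition columns (m : nat) : seq nat := iota 0 (m.*2).-1.

(* Columns below a NE step: the (a+1)-st step (index a) is NE. *)
Definition up_columns (m : nat) (P : seq bool) : seq nat :=
  [seq a <- columns m | nth false P a].

(* Odd columns: a+1 odd, i.e. a even. *)
Definition odd_columns (m : nat) : seq nat :=
  [seq a <- columns m | ~~ odd a].

From mathcomp Require Import all_boot zify.
Set Implicit Arguments. Unset Strict Implicit. Unset Printing Implicit Defensive.

(* Cells of column a have b of the parity of a and b < h, where h is the height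
   after step a; h has the parity of a + 1, so the column has ceil(h/2) cells.
   It then suffices that, for every v > 0, as many up-steps as even abscissae a
   have ceil(h(a+1)/2) = v.  Scanning the path from left to right, the two
   counts differ by the indicator of h >= 2v: an up-step of value v at odd a
   raises h from 2v-1 to 2v, an even abscissa of value v that is a down-step
   lowers h from 2v to 2v-1, and every other step changes neither the
   difference nor the indicator.  At the end h <= 1, so the counts agree, and
   two duplicate-free lists with the same multiset of column sizes are in
   size-preserving bijection. *)

Section ValuePreservingBijection.
Variables (T R : eqType) (f : T -> R).

Lemma perm_map_bijection (s t : seq T) : uniq s -> uniq t ->
  perm_eq (map f s) (map f t) ->
  exists kappa : T -> T,
    [/\ {in s, forall c, kappa c \in t}, {in s &, injective kappa},
        {in t, forall d, exists2 c, c \in s & kappa c = d} &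
        {in s, forall c, f (kappa c) = f c}].
Proof.
elim: s t => [|x s IHs] t /= us ut.
  move/perm_size; rewrite size_map => /esym/size0nil ->.
  by exists id; split.
case/andP: us => xs us pxt.
have : f x \in map f t by rewrite -(perm_mem pxt) mem_head.
case/mapP => y yt fxy.
have ut' : uniq (rem y t) by exact: rem_uniq.
have pst : perm_eq (map f s) (map f (rem y t)).
  rewrite -(perm_cons (f x)); apply: perm_trans pxt _.
  by rewrite fxy; exact: perm_map (perm_to_rem yt).
have [k [kt kinj ksurj kf]] := IHs _ us ut' pst.
have in_rem : forall z, (z \in rem y t) = (z != y) && (z \in t).
  by move=> z; rewrite mem_rem_uniq.
exists (fun z => if z == x then y else k z); split.
- move=> c; rewrite inE; case: eqP => [_ _|_ /= cs] //.
  by have := kt c cs; rewrite in_rem => /andP [].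
- move=> a b; rewrite !inE.
  case: (eqVneq a x) => [->|ax]; case: (eqVneq b x) => [->|bx] //= ha hb.
  + by move=> e; have := kt b hb; rewrite in_rem -e eqxx.
  + by move=> e; have := kt a ha; rewrite in_rem e eqxx.
  + exact: kinj.
- move=> d dt; case: (eqVneq d y) => [->|dy]; first by exists x; rewrite ?inE ?eqxx.
  have : d \in rem y t by rewrite in_rem dy.
  case/ksurj => c cs <-; exists c; first by rewrite inE cs orbT.
  by case: eqP => // cx; move: xs; rewrite -cx cs.
- move=> c; rewrite inE; case: eqP => [->|_ /= cs] //.
  exact: kf.
Qed.

End ValuePreservingBijection.

Lemma nups_add_ndowns (s : seq bool) : nups s + ndowns s = size s.
Proof. exact: (count_predC id). Qed.

Lemma height_le_size (P : seq bool) x : height P x <= size P.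
Proof.
have := nups_add_ndowns (take x P); rewrite size_take /height.
case: ltnP => hx; lia.
Qed.

Lemma count_iota_parity a N H :
  count (fun b => ~~ odd (a + b) && (b < H)) (iota 0 N) = (minn N H + ~~ odd a)./2.
Proof.
elim: N => [|N IHN]; first by rewrite /=; lia.
rewrite -addn1 iotaD count_cat IHN /= add0n addn0.
case: (odd a) (odd (a + N)) (ltnP N H) (oddD a N) => [] [] /= h //; lia.
Qed.

Section DyckPath.
Variables (n : nat) (D : seq bool).
Hypothesis dyckD : dyck n D.

Let size_D : size D = n.*2. Proof. by case: dyckD. Qed.
Let downs_le_ups x : ndowns (take x D) <= nups (take x D). Proof. by case: dyckD. Qed.

Lemma odd_height x : x <= size D -> odd (height D x) = odd x.
Proof.
move=> hx; have := nups_add_ndowns (take x D); rewrite size_takel //.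
have := downs_le_ups x; rewrite /height; lia.
Qed.

Lemma heightS x : x < size D ->
  height D x.+1 + ~~ nth false D x = height D x + nth false D x.
Proof.
move=> hx; have := downs_le_ups x.+1; have := downs_le_ups x.
rewrite /height /nups /ndowns (take_nth false hx) -cats1 !count_cat /=.
case: (nth false D x) => /=; lia.
Qed.

Lemma height_last_column : height D (n.*2).-1 <= 1.
Proof.
case: n size_D => [|m] hs; first by rewrite /height take0.
have hx : (m.+1).*2.-1 < size D by rewrite hs; lia.
have := heightS hx; have -> : (m.+1).*2.-1.+1 = size D by rewrite hs; lia.
have [_ _ ups_downs] := dyckD.
rewrite /height take_size ups_downs subnn; case: (nth false D _) => /=; lia.
Qed.

Lemma size_column a : a < (n.*2).-1 ->
  size (column n D a) = uphalf (height D a.+1).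
Proof.
move=> ha; rewrite /column size_filter count_map.
rewrite (@eq_count _ _ (fun b => ~~ odd (a + b) && (b < height D a.+1))); last first.
  by move=> b; rewrite /in_shape /= addn1 (_ : a <= n.*2 - 2) //; lia.
rewrite count_iota_parity (minn_idPr (height_le_size D a.+1)).
have := @odd_height a.+1; rewrite size_D => /(_ ltac:(lia)) /=; lia.
Qed.

Local Notation colh a := (uphalf (height D a.+1)).

Lemma count_up_even_height v x : 0 < v -> x <= size D ->
  count (fun a => nth false D a && (colh a == v)) (iota 0 x) =
  count (fun a => ~~ odd a && (colh a == v)) (iota 0 x) + (v.*2 <= height D x).
Proof.
move=> hv; elim: x => [|x IHx] hx; first by rewrite /= /height take0 /=; lia.
rewrite -addn1 iotaD !count_cat (IHx (ltnW hx)) /= !add0n !addn0 addn1.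
have := heightS hx; have := odd_height (ltnW hx); have := odd_height hx.
case: (nth false D x) => /=; lia.
Qed.

Lemma count_column_size (P : pred nat) v :
  count (fun a => size (column n D a) == v) [seq a <- columns n | P a] =
  count (fun a => P a && (colh a == v)) (iota 0 (n.*2).-1).
Proof.
rewrite count_filter; apply: eq_in_count => a; rewrite mem_iota => ha /=.
by rewrite size_column 1?andbC //; lia.
Qed.

Lemma count_column_size_eq v :
  count (fun a => size (column n D a) == v) (up_columns n D) =
  count (fun a => size (column n D a) == v) (odd_columns n).
Proof.
rewrite !count_column_size; case: v => [|v].
  rewrite !(@eq_in_count _ _ pred0) ?count_pred0 // => a; rewrite mem_iota => ha /=.
  - have := @odd_height a.+1; rewrite size_D => /(_ ltac:(lia)) /=.
    by case: (odd a) => //= hodd; apply/negbTE/eqP; lia.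
  - have := @heightS a; rewrite size_D => /(_ ltac:(lia)).
    by case: (nth false D a) => //= hup; apply/negbTE/eqP; lia.
rewrite count_up_even_height //; last by rewrite size_D; lia.
by have := height_last_column; case: leqP => //; lia.
Qed.

End DyckPath.

Theorem mainTheorem9 (n : nat) (D : seq bool) :
  dyck n D ->
  exists kappa : nat -> nat,
    [/\ {in up_columns n D, forall c, kappa c \in odd_columns n},
        {in up_columns n D &, injective kappa},
        {in odd_columns n, forall d, exists2 c, c \in up_columns n D & kappa c = d} &
        {in up_columns n D, forall c,
            size (column n D (kappa c)) = size (column n D c)}].
Proof.
move=> dyckD.
apply: (@perm_map_bijection _ _ (fun a => size (column n D a))).
- by rewrite filter_uniq // iota_uniq.
- by rewrite filter_uniq // iota_uniq.
- apply/allP => v _; apply/eqP; rewrite !count_map.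
  exact: count_column_size_eq.
Qed.
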